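(* Let $n\ge 4$ and consider the Markov chain on $\{0,1,\dots,n-1\}$ with $n\times n$ transition probability matrix $\mathbf P=(P_{ij})$ given by: $P_{00}=5/6$, $P_{01}=1/6$; $P_{10}=5/6$, $P_{12}=1/6$; for $2\le i\le n-3$: $P_{i0}=2/3$, $P_{i,i-1}=1/6$, $P_{i,i+1}=1/6$; $P_{n-2,0}=16/21$, $P_{n-2,n-3}=1/6$, $P_{n-2,n-1}=1/14$; $P_{n-1,0}=1/3$, $P_{n-1,n-2}=1/6$, $P_{n-1,n-1}=1/2$; all other entries $0$. Then the steady state probability vector $\vec\pi=(\pi_0,\dots,\pi_{n-1})$ (the unique probability vector with $\vec\pi=\vec\pi\mathbf P$) is $$\vec\pi=\left(\frac{c_n}{\sum_{l=1}^n c_l},\frac{c_{n-1}}{\sum_{l=1}^n c_l},\dots,\frac{c_1}{\sum_{l=1}^n c_l}\right),$$ i.e. $\pi_i=c_{n-i}/\sum_{l=1}^n c_l$ for $i=0,\dots,n-1$.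
   Context: The cobalancing numbers are $b_0=0$, $b_1=0$, $b_{m+1}=6b_m-b_{m-1}+2$ (so $b_2=2$, $b_3=14$). The Lucas-cobalancing numbers are $c_m=\sqrt{8b_m^2+8b_m+1}$ for $m\ge1$; thus $c_1=1$, $c_2=7$, $c_3=41$, and $c_{m+1}=6c_m-c_{m-1}$. *)

From Stdlib Require Import PeanoNat.
From HB Require Import structures.
From mathcomp Require Import all_boot all_order all_algebra.
Set Implicit Arguments. Unset Strict Implicit. Unset Printing Implicit Defensive.
Import Order.TTheory GRing.Theory Num.Theory.

(* cobalancing numbers: b_0 = 0, b_1 = 0, b_{m+1} = 6 b_m - b_{m-1} + 2.
   bpair m = (b_m, b_{m+1}). The sequence is nondecreasing, so truncated
   subtraction is harmless. *)
Fixpoint bpair (m : nat) : nat * nat :=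
  match m with
  | 0 => (0, 0)
  | m'.+1 => let: (x, y) := bpair m' in (y, 6 * y - x + 2)
  end.
Definition cobal (m : nat) : nat := (bpair m).1.

(* Lucas-cobalancing numbers: c_m = sqrt(8 b_m^2 + 8 b_m + 1) (m >= 1). *)
Definition lcobal (m : nat) : nat :=
  Nat.sqrt (8 * cobal m ^ 2 + 8 * cobal m + 1).

Local Open Scope ring_scope.

Definition Pentry (R : realFieldType) (n i j : nat) : R :=
  if i == 0%N then
    (if j == 0%N then 5/6 else if j == 1%N then 1/6 else 0)
  else if i == 1%N then
    (if j == 0%N then 5/6 else if j == 2%N then 1/6 else 0)
  else if (i <= n - 3)%N then
    (if j == 0%N then 2/3 else if j == i.-1 then 1/6
     else if j == i.+1 then 1/6 else 0)
  else if i == (n - 2)%N then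
    (if j == 0%N then 16/21 else if j == (n - 3)%N then 1/6
     else if j == (n - 1)%N then 1/14 else 0)
  else if i == (n - 1)%N then
    (if j == 0%N then 1/3 else if j == (n - 2)%N then 1/6
     else if j == (n - 1)%N then 1/2 else 0)
  else 0.

Definition Pmat (R : realFieldType) (n : nat) : 'M[R]_n :=
  \matrix_(i < n, j < n) Pentry R n i j.

Definition prob_vec (R : realFieldType) (n : nat) (p : 'rV[R]_n) : Prop :=
  (forall i, 0 <= p 0 i) /\ \sum_(i < n) p 0 i = 1.

Definition pi_vec (R : realFieldType) (n : nat) : 'rV[R]_n :=
  \row_(i < n) ((lcobal (n - i))%:R / \sum_(1 <= l < n.+1) (lcobal l)%:R).

From mathcomp Require Import all_boot all_order all_algebra.
From mathcomp Require Import zify ring lra.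
From Stdlib Require PeanoNat.

(* Writing c_m := b_(m+1) - 3 b_m - 1, the invariant
   b_(m+1)^2 - 6 b_m b_(m+1) + b_m^2 - 2 b_m - 2 b_(m+1) = 0 of the cobalancing
   recurrence gives c_m^2 = 8 b_m^2 + 8 b_m + 1, so c_m is the Lucas-cobalancing
   number, and c satisfies c_(m+2) = 6 c_(m+1) - c_m.  Away from state 0 the
   balance equations pi = pi P only link neighbouring states:
   pi_(n-2) = 7 pi_(n-1) and pi_(j-1) + pi_(j+1) = 6 pi_j for 0 < j < n-1.
   Read backwards from state n-1 this is the Lucas-cobalancing recurrence, so every
   stationary vector is pi_(n-1) (c_n, ..., c_1), and normalising fixes pi_(n-1).
   Conversely the balance equation at state 0 follows from the closed form
   4 (c_1 + ... + c_n) = 5 c_n - c_(n-1) - 2. *)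

Set Implicit Arguments.
Unset Strict Implicit.
Unset Printing Implicit Defensive.
Import Order.TTheory GRing.Theory Num.Theory.
Local Open Scope ring_scope.

Lemma cobalSS m : cobal m.+2 = (6 * cobal m.+1 - cobal m + 2)%N.
Proof. by rewrite /cobal /=; case: (bpair m). Qed.

Lemma cobal_le_succ m : (cobal m <= cobal m.+1)%N.
Proof. by elim: m => [|m IH] //; rewrite cobalSS; lia. Qed.

Lemma cobal_rec m : (cobal m.+2)%:Z = 6 * (cobal m.+1)%:Z - (cobal m)%:Z + 2.
Proof. by rewrite cobalSS; have := cobal_le_succ m; lia. Qed.

Lemma cobal_quadratic m :
  (cobal m.+1)%:Z ^+ 2 - 6 * (cobal m)%:Z * (cobal m.+1)%:Z + (cobal m)%:Z ^+ 2
    - 2 * (cobal m)%:Z - 2 * (cobal m.+1)%:Z = 0.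
Proof. by elim: m => [|m IH] //; rewrite cobal_rec -{}IH; ring. Qed.

(* [lucas 0 = -1] is forced by c_2 = 6 c_1 - c_0; it is not [lcobal 0 = 1]. *)
Fixpoint lucas (m : nat) : int :=
  match m with
  | 0 => -1
  | 1 => 1
  | (k.+1 as m').+1 => 6 * lucas m' - lucas k
  end.

Lemma lucas_rec m : lucas m.+2 = 6 * lucas m.+1 - lucas m.
Proof. by []. Qed.

Lemma lucas_cobal m : lucas m = (cobal m.+1)%:Z - 3 * (cobal m)%:Z - 1.
Proof.
suff [] : lucas m = (cobal m.+1)%:Z - 3 * (cobal m)%:Z - 1
          /\ lucas m.+1 = (cobal m.+2)%:Z - 3 * (cobal m.+1)%:Z - 1 by [].
elim: m => [|m [IH1 IH2]] //; split=> //.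
by rewrite lucas_rec IH1 IH2; have := cobal_rec m; have := cobal_rec m.+1; lia.
Qed.

Lemma lucas_sqr m : lucas m ^+ 2 = 8 * (cobal m)%:Z ^+ 2 + 8 * (cobal m)%:Z + 1.
Proof. by rewrite lucas_cobal -[RHS]addr0 -(cobal_quadratic m); ring. Qed.

Lemma lucas_gt0 m : (0 < m)%N -> 0 < lucas m.
Proof.
suff mono k : 0 < lucas k.+1 <= lucas k.+2 by case: m => // m _; case/andP: (mono m).
by elim: k => [|k /andP[]] //; rewrite (lucas_rec k.+1); lia.
Qed.

Lemma lcobalE m : (0 < m)%N -> (lcobal m)%:Z = lucas m.
Proof.
move=> /lucas_gt0 lucas_m_gt0; have := lucas_sqr m.
case: (lucas m) lucas_m_gt0 => // k _ sq; congr Posz.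
rewrite /lcobal (_ : _ + 1 = k * k)%N ?PeanoNat.Nat.sqrt_square //.
by move: sq; rewrite !expr2; lia.
Qed.

Lemma sum_mul_delta (R : pzSemiRingType) n (q : nat -> R) k a : (k < n)%N ->
  \sum_(i < n) q i * (if (i : nat) == k then a else 0) = q k * a.
Proof.
move=> k_lt; rewrite (eq_bigr (fun i : 'I_n => if (i : nat) == k then q i * a else 0)).
  by rewrite -big_mkcond /= (big_ord1_eq _ (fun j => q j * a)) k_lt.
by move=> i _; case: eqP; rewrite ?mulr0.
Qed.

Section Real.
Variable R : realFieldType.
Local Notation c m := ((lucas m)%:~R : R).

Lemma lucasR_rec m : c m.+2 = 6 * c m.+1 - c m.
Proof. by rewrite lucas_rec rmorphB rmorphM. Qed.

Lemma lucasR_gt0 m : (0 < m)%N -> 0 < c m.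
Proof. by move=> /lucas_gt0; rewrite ltr0z. Qed.

Lemma lucas_rec_unique (r : nat -> R) N :
  r 2%N = 7 * r 1%N ->
  (forall k, (0 < k)%N -> (k.+2 <= N)%N -> r k.+2 = 6 * r k.+1 - r k) ->
  forall k, (0 < k <= N)%N -> r k = c k * r 1%N.
Proof.
move=> r2 rS.
have pair k : (k.+2 <= N)%N -> r k.+1 = c k.+1 * r 1%N /\ r k.+2 = c k.+2 * r 1%N.
  elim: k => [|k IH] k_lt; first by rewrite mul1r r2.
  have [e1 e2] := IH (ltnW k_lt); split=> //.
  by rewrite rS // e1 e2 (lucasR_rec k.+1); ring.
case=> [|[|k]] //= k_le; first by rewrite mul1r.
by case: (pair k).
Qed.

Definition lucas_sum n : R := \sum_(i < n) c i.+1.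

Lemma lucas_sum_closed m : 4 * lucas_sum m.+1 = 5 * c m.+1 - c m - 2.
Proof.
elim: m => [|m IH]; first by rewrite /lucas_sum big_ord1 /=; lra.
by rewrite /lucas_sum big_ord_recr /= mulrDr IH lucasR_rec; ring.
Qed.

Lemma lucas_sum_gt0 n : (0 < n)%N -> 0 < lucas_sum n.
Proof.
case: n => // n _; rewrite /lucas_sum big_ord_recl.
by rewrite ltr_pwDl ?lucasR_gt0 // sumr_ge0 // => i _; rewrite ltW ?lucasR_gt0.
Qed.

Lemma lucas_sum_rev n : \sum_(i < n) c (n - i) = lucas_sum n.
Proof. by rewrite (reindex_inj rev_ord_inj); apply: eq_bigr => i _; rewrite /= subKn. Qed.

Lemma sum_lcobal n : \sum_(1 <= l < n.+1) (lcobal l)%:R = lucas_sum n.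
Proof. by rewrite big_add1 big_mkord; apply: eq_bigr => i _; rewrite -lcobalE. Qed.

Section Markov.
Variable n : nat.
Hypothesis n_ge4 : (4 <= n)%N.

Ltac case_Pentry := rewrite /Pentry; repeat (case: ifP => ?; try (exfalso; lia)).

Lemma Pentry_col0 i : (i < n)%N ->
  Pentry R n i 0 = 2/3 + (if i == 0%N then 1/6 else 0) + (if i == 1%N then 1/6 else 0)
    + (if i == (n - 2)%N then 2/21 else 0) - (if i == (n - 1)%N then 1/3 else 0).
Proof. by move=> i_lt; case_Pentry; lra. Qed.

Lemma Pentry_col_mid i j : (i < n)%N -> (0 < j < n - 1)%N ->
  Pentry R n i j = (if i == j.-1 then 1/6 else 0) + (if i == j.+1 then 1/6 else 0).
Proof. by move=> i_lt j_mid; case_Pentry; lra. Qed.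

Lemma Pentry_col_last i : (i < n)%N ->
  Pentry R n i (n - 1) = (if i == (n - 2)%N then 1/14 else 0) + (if i == (n - 1)%N then 1/2 else 0).
Proof. by move=> i_lt; case_Pentry; lra. Qed.

Lemma mul_row_Pmat (q : nat -> R) (j : 'I_n) :
  (\row_(i < n) q i *m Pmat R n) 0 j = \sum_(i < n) q i * Pentry R n i j.
Proof. by rewrite mxE; apply: eq_bigr => i _; rewrite !mxE. Qed.

Lemma mul_row_Pmat_col0 (q : nat -> R) (j : 'I_n) : j = 0%N :> nat ->
  (\row_(i < n) q i *m Pmat R n) 0 j =
    2/3 * \sum_(i < n) q i + (q 0%N + q 1%N) / 6 + 2/21 * q (n - 2)%N - q (n - 1)%N / 3.
Proof.
move=> j0; rewrite mul_row_Pmat j0.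
under eq_bigr => i _ do rewrite Pentry_col0 // mulrBr !mulrDr.
rewrite sumrB !big_split /= !sum_mul_delta; try lia.
by rewrite -mulr_suml; lra.
Qed.

Lemma mul_row_Pmat_mid (q : nat -> R) (j : 'I_n) : (0 < j < n - 1)%N ->
  (\row_(i < n) q i *m Pmat R n) 0 j = (q j.-1 + q j.+1) / 6.
Proof.
move=> j_mid; rewrite mul_row_Pmat.
under eq_bigr => i _ do rewrite Pentry_col_mid // mulrDr.
by rewrite big_split /= !sum_mul_delta; try lia; lra.
Qed.

Lemma mul_row_Pmat_last (q : nat -> R) (j : 'I_n) : j = (n - 1)%N :> nat ->
  (\row_(i < n) q i *m Pmat R n) 0 j = q (n - 2)%N / 14 + q (n - 1)%N / 2.
Proof.
move=> j_last; rewrite mul_row_Pmat j_last.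
under eq_bigr => i _ do rewrite Pentry_col_last // mulrDr.
by rewrite big_split /= !sum_mul_delta; try lia; lra.
Qed.

Lemma pi_vecE : pi_vec R n = \row_(i < n) (c (n - i) / lucas_sum n).
Proof. by apply/rowP => i; rewrite !mxE sum_lcobal -lcobalE // subn_gt0. Qed.

Lemma pi_vec_prob : prob_vec (pi_vec R n).
Proof.
have T_gt0 : 0 < lucas_sum n by apply: lucas_sum_gt0; lia.
rewrite pi_vecE; split=> [i|].
  by rewrite mxE divr_ge0 ?ltW ?lucasR_gt0 // subn_gt0.
under eq_bigr => i _ do rewrite mxE.
by rewrite -mulr_suml lucas_sum_rev divff ?gt_eqF.
Qed.

Lemma pi_vec_stationary : pi_vec R n = pi_vec R n *m Pmat R n.
Proof.
have T_neq0 : lucas_sum n != 0 by rewrite gt_eqF // lucas_sum_gt0 //; lia.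
have n_sub2 : (n - (n - 2) = 2)%N by lia.
have n_sub1 : (n - (n - 1) = 1)%N by lia.
pose q k := c (n - k) / lucas_sum n.
rewrite pi_vecE; apply/rowP => j; rewrite mxE.
have [j0|j_gt0] := posnP j.
  rewrite (mul_row_Pmat_col0 q) // -mulr_suml lucas_sum_rev divff // j0.
  rewrite /q !subn0 n_sub2 n_sub1 subn1.
  have := lucas_sum_closed n.-1; rewrite prednK; last lia.
  move=> T_closed.
  have c_n : c n = 2/3 * lucas_sum n + (c n + c n.-1) / 6 + 1/3 by lra.
  by rewrite {1}c_n; field.
have [j_last|j_lt] := eqVneq (j : nat) (n - 1)%N.
  by rewrite (mul_row_Pmat_last q) // j_last /q n_sub2 n_sub1; field.
have j_lt_n := ltn_ord j.
rewrite (mul_row_Pmat_mid q) /q; last lia.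
have -> : (n - j = (n - j.+1).+1)%N by lia.
have -> : (n - j.-1 = (n - j.+1).+2)%N by lia.
by rewrite lucasR_rec; field.
Qed.

Lemma stationary_lucas (q : nat -> R) :
  \row_(i < n) q i = \row_(i < n) q i *m Pmat R n ->
  forall i, (i < n)%N -> q i = c (n - i) * q (n - 1)%N.
Proof.
move=> q_stat.
have colE j (j_lt : (j < n)%N) : q j = (\row_(i < n) q i *m Pmat R n) 0 (Ordinal j_lt).
  by rewrite -q_stat [RHS]mxE.
have q_last : q (n - 2)%N = 7 * q (n - 1)%N.
  have last_lt : (n - 1 < n)%N by lia.
  by have := colE _ last_lt; rewrite (mul_row_Pmat_last q) //; lra.
have q_mid k : (0 < k)%N -> (k.+2 <= n)%N ->
    q (n - k.+2)%N = 6 * q (n - k.+1)%N - q (n - k)%N.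
  move=> k_gt0 k_le; have j_lt : (n - k.+1 < n)%N by lia.
  have := colE _ j_lt; rewrite (mul_row_Pmat_mid q) -[nat_of_ord _]/(n - k.+1)%N; last lia.
  have e1 : ((n - k.+1).-1 = n - k.+2)%N by lia.
  have e2 : ((n - k.+1).+1 = n - k)%N by lia.
  by rewrite e1 e2; lra.
move=> i i_lt.
have := @lucas_rec_unique (fun k => q (n - k)%N) n q_last q_mid (n - i).
by rewrite (subKn (ltnW i_lt)); apply; lia.
Qed.

Lemma stationary_unique (p : 'rV[R]_n) :
  prob_vec p -> p = p *m Pmat R n -> p = pi_vec R n.
Proof.
move=> [_ p_sum] p_stat.
pose q k := oapp (p 0) 0 (insub k).
have pq (i : 'I_n) : p 0 i = q i by rewrite /q valK.
have pE : p = \row_(i < n) q i by apply/rowP => i; rewrite [RHS]mxE pq.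
have qE : forall i, (i < n)%N -> q i = c (n - i) * q (n - 1)%N.
  by apply: stationary_lucas; rewrite -pE.
have T_neq0 : lucas_sum n != 0 by rewrite gt_eqF // lucas_sum_gt0 //; lia.
have T_mass : lucas_sum n * q (n - 1)%N = 1.
  rewrite -p_sum -lucas_sum_rev mulr_suml; apply: eq_bigr => i _.
  by rewrite pq (qE i).
have q_last : q (n - 1)%N = (lucas_sum n)^-1 by rewrite -[RHS]mulr1 -T_mass mulKf.
by rewrite pi_vecE; apply/rowP => i; rewrite [RHS]mxE pq (qE i) ?q_last.
Qed.

End Markov.
End Real.

Theorem theorem3p3 (R : realFieldType) (n : nat) (hn : (4 <= n)%N) :
  (prob_vec (pi_vec R n) /\ pi_vec R n = pi_vec R n *m Pmat R n) /\
  (forall p : 'rV[R]_n, prob_vec p -> p = p *m Pmat R n -> p = pi_vec R n).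
Proof.
split; first by split; [apply: pi_vec_prob | apply: pi_vec_stationary].
exact: stationary_unique.
Qed.
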